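(* Let $(a_n)_{n\ge0}$ be nonzero complex numbers with $|a_0|\ge|a_1|\ge\cdots$ and $\sum_n|a_n|^2<\infty$, and let $T$ be the weighted shift $Te_n=a_ne_{n+1}$. Let $S\in\mathcal A_T$ and $k>1$ be such that $\hat S(j)=0$ for $j=1,\dots,k-1$ and $\hat S(k)\ne0$. Then $\langle S\rangle=\langle T^k\rangle$ if and only if the basis vector $e_k$ belongs to the closed linear span of $\{T^mSe_0: m\ge0\}$.
   Context: $H$ is a complex Hilbert space with orthonormal basis $\{e_n\}_{n\ge0}$, $Te_n=a_ne_{n+1}$, and $\mathcal A_T$ is the operator-norm closure of the polynomials $p(T)$ with $p(0)=0$. For $R\in\mathcal A_T$, $\langle R\rangle$ is the smallest closed ideal of $\mathcal A_T$ containing $R$. For $\lambda$ in the unit circle $\mathbb T$ let $W_\lambda e_n=\lambda^ne_n$ and $\gamma_\lambda(S)=W_\lambda SW_\lambda^*$ (a norm-continuous action of $\mathbb T$ on $\mathcal A_T$ by isometric automorphisms with $\gamma_\lambda(T)=\lambda T$). For $S\in\mathcal A_T$, $j\ge1$, $\hat S(j)\in\mathbb C$ is defined by $\int_{\mathbb T}\gamma_\lambda(S)\lambda^{-j}\,dm(\lambda)=\hat S(j)T^j$ ($dm$ normalized Haar measure). *)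

From Stdlib Require Import Reals.
From Coquelicot Require Import Coquelicot.
Open Scope R_scope.

(* The Hilbert space H with orthonormal basis (e_n) is modelled as l^2(N;C):
   vectors are complex sequences, e_n is the n-th unit sequence. *)
Definition vec := nat -> C.
Definition op := vec -> vec.

Definition basis (k : nat) : vec := fun n => if Nat.eqb n k then 1%C else 0%C.

Definition l2 (x : vec) : Prop := ex_series (fun n => (Cmod (x n)) ^ 2).
Definition hnorm (x : vec) : R := sqrt (Series (fun n => (Cmod (x n)) ^ 2)).

(* ||v|| <= r  (stated via partial sums, so it also forces v to be in l^2) *)
Definition norm_le (v : vec) (r : R) : Prop :=
  0 <= r /\ forall N, sum_f_R0 (fun n => (Cmod (v n)) ^ 2) N <= r ^ 2.

Definition vsub (x y : vec) : vec := fun n => Cminus (x n) (y n).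

Definition op_close (A B : op) (e : R) : Prop :=
  forall x, l2 x -> norm_le (vsub (A x) (B x)) (e * hnorm x).

Definition op_add (A B : op) : op := fun x n => Cplus (A x n) (B x n).
Definition op_scal (c : C) (A : op) : op := fun x n => Cmult c (A x n).
Definition op_comp (A B : op) : op := fun x => A (B x).
Definition op_zero : op := fun _ _ => 0%C.

(* weighted shift T e_n = a_n e_{n+1} *)
Definition wshift (a : nat -> C) : op :=
  fun x n => match n with O => 0%C | S m => Cmult (a m) (x m) end.

Definition op_pow (A : op) (i : nat) : op := fun x => Nat.iter i A x.

(* p(T) with p(0) = 0:  sum_{i=0}^{d} c_i T^{i+1} *)
Definition poly_op (a : nat -> C) (c : nat -> C) (d : nat) : op :=
  fun x n => sum_n (fun i => Cmult (c i) (op_pow (wshift a) (S i) x n)) d.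

Definition inAT (a : nat -> C) (S : op) : Prop :=
  forall e, 0 < e -> exists (c : nat -> C) (d : nat), op_close S (poly_op a c d) e.

Definition closed_ideal (a : nat -> C) (I : op -> Prop) : Prop :=
  (forall X, I X -> inAT a X) /\
  I op_zero /\
  (forall X Y, I X -> I Y -> I (op_add X Y)) /\
  (forall c X, I X -> I (op_scal c X)) /\
  (forall A X, inAT a A -> I X -> I (op_comp A X) /\ I (op_comp X A)) /\
  (forall X, (forall e, 0 < e -> exists Y, I Y /\ op_close X Y e) -> I X).

Definition gen_ideal (a : nat -> C) (R0 : op) : op -> Prop :=
  fun X => forall I, closed_ideal a I -> I R0 -> I X.

(* \hat S(j): the defining identity  int gamma_lambda(S) lambda^{-j} dm = \hat S(j) T^j
   read off at the matrix entry <. e_0, e_j>, where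
   <int gamma_lambda(S) lambda^{-j} dm e_0, e_j> = <S e_0, e_j>. *)
Definition Shat (a : nat -> C) (S : op) (j : nat) : C :=
  Cdiv (S (basis 0) j) (op_pow (wshift a) j (basis 0) j).

Definition in_closed_span_orbit (a : nat -> C) (S : op) (k : nat) : Prop :=
  forall e, 0 < e -> exists (c : nat -> C) (d : nat),
    norm_le (vsub (basis k)
              (fun n => sum_n (fun m => Cmult (c m) (op_pow (wshift a) m (S (basis 0)) n)) d)) e.

(* If [<S> = <T^k>], then [T^k] lies in the closed ideal of limits of [Z S], [Z] a polynomial in [T];
   evaluating at [e_0] puts [e_k] in the closed span of the [T^m S e_0].
   Conversely, assume [e_k] is in that span. An element [X] of [A_T] whose [X e_0] vanishes at
   [e_1, ..., e_(r-1)] belongs to every closed ideal containing [T^r]: in a polynomial approximation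
   of [X] the terms of degree [< r] have small coefficients. With [r = k] this gives [S] in [<T^k>].
   For the other inclusion, [||T X|| <= ||a||_2 ||X e_0||] for [X] in [A_T] because the weights
   decrease. Writing [T^k e_0 = w e_k] and taking [X = T^k - w (sum_m c_m T^m S)] with
   [sum_m c_m T^m S e_0] close to [e_k], this shows [T^(k+1)] in [<S>]. Then [S - Shat(k) T^k]
   vanishes at [e_1, ..., e_k], so it lies in [<S>], and hence so does [T^k]. *)

From Stdlib Require Import Reals Lra Lia FunctionalExtensionality.
From Coquelicot Require Import Coquelicot.
Open Scope R_scope.

Ltac Cring := match goal with |- @eq _ ?x ?y => change (@eq C x y) end; ring.
Ltac Cfield := match goal with |- @eq _ ?x ?y => change (@eq C x y) end; field.
Ltac op_ext := apply functional_extensionality; intros ?x; apply functional_extensionality; intros ?n.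

(* Coquelicot's [sum_n] lemmas instantiated at [C]: the generic forms do not unify with sums in [C]. *)
Lemma Csum_O (f : nat -> C) : sum_n f 0 = f 0%nat.
Proof. exact (@sum_O C_AbelianMonoid f). Qed.

Lemma Csum_S (f : nat -> C) d : sum_n f (S d) = Cplus (sum_n f d) (f (S d)).
Proof. exact (@sum_Sn C_AbelianMonoid f d). Qed.

Lemma Csum_ext (f g : nat -> C) d :
  (forall i, (i <= d)%nat -> f i = g i) -> sum_n f d = sum_n g d.
Proof. exact (@sum_n_ext_loc C_AbelianMonoid f g d). Qed.

Lemma Csum_plus (f g : nat -> C) d :
  sum_n (fun i => Cplus (f i) (g i)) d = Cplus (sum_n f d) (sum_n g d).
Proof. exact (@sum_n_plus C_AbelianMonoid f g d). Qed.

Lemma Csum_scal_l (c : C) (f : nat -> C) d :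
  sum_n (fun i => Cmult c (f i)) d = Cmult c (sum_n f d).
Proof. exact (@sum_n_mult_l C_Ring c f d). Qed.


Lemma Csum_minus (f g : nat -> C) d :
  sum_n (fun i => Cminus (f i) (g i)) d = Cminus (sum_n f d) (sum_n g d).
Proof.
  induction d.
  - rewrite !Csum_O. reflexivity.
  - rewrite !Csum_S, IHd. Cring.
Qed.

Lemma Csum_shift (f : nat -> C) d :
  sum_n f (S d) = Cplus (f 0%nat) (sum_n (fun i => f (S i)) d).
Proof.
  induction d.
  - rewrite Csum_S, !Csum_O. reflexivity.
  - rewrite (Csum_S f (S d)), IHd, (Csum_S (fun i => f (S i)) d). Cring.
Qed.

Lemma Csum_eq0 (f : nat -> C) d :
  (forall i, (i <= d)%nat -> f i = (0:C)) -> sum_n f d = (0:C).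
Proof.
  intros H. induction d.
  - rewrite Csum_O. apply H; lia.
  - rewrite Csum_S, IHd, (H (S d)); [Cring | lia | intros; apply H; lia].
Qed.

Lemma Csum_single (f : nat -> C) d j : (j <= d)%nat ->
  (forall i, (i <= d)%nat -> i <> j -> f i = (0:C)) -> sum_n f d = f j.
Proof.
  intros Hj H. induction d.
  - replace j with 0%nat by lia. apply Csum_O.
  - destruct (Nat.eq_dec j (S d)) as [->|Hne].
    + rewrite Csum_S, Csum_eq0 by (intros; apply H; lia). Cring.
    + rewrite Csum_S, IHd, (H (S d)) by (auto; lia). Cring.
Qed.

Lemma Csum_pad (f : nat -> C) d D : (d <= D)%nat ->
  sum_n (fun i => if Nat.leb i d then f i else (0:C)) D = sum_n f d.
Proof.
  induction 1.
  - apply Csum_ext. intros i Hi. apply Nat.leb_le in Hi. now rewrite Hi.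
  - rewrite Csum_S, IHle. replace (Nat.leb (S m) d) with false. Cring.
    symmetry. apply Nat.leb_gt. lia.
Qed.

Lemma Csum_vec_O (f : nat -> vec) : (fun n => sum_n (fun i => f i n) 0) = f 0%nat.
Proof. apply functional_extensionality. intros n. apply Csum_O. Qed.

Lemma Csum_vec_S (f : nat -> vec) d :
  (fun n => sum_n (fun i => f i n) (S d)) =
  (fun n => Cplus (sum_n (fun i => f i n) d) (f (S d) n)).
Proof. apply functional_extensionality. intros n. apply Csum_S. Qed.

Definition sqsum (v : vec) (N : nat) : R := sum_f_R0 (fun n => Cmod (v n) ^ 2) N.

Lemma sqsum_nonneg v N : 0 <= sqsum v N.
Proof. apply cond_pos_sum. intros n. apply pow2_ge_0. Qed.

Lemma sqsum_le_S v N : sqsum v N <= sqsum v (S N).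
Proof.
  change (sqsum v (S N)) with (sqsum v N + Cmod (v (S N)) ^ 2). pose proof (pow2_ge_0 (Cmod (v (S N)))). lra.
Qed.

Lemma sum_f_R0_scal_r c f N : sum_f_R0 (fun i => f i * c) N = sum_f_R0 f N * c.
Proof. induction N; simpl; [|rewrite IHN]; ring. Qed.

Lemma norm_le_nonneg v r : norm_le v r -> 0 <= r.
Proof. now intros []. Qed.

Lemma norm_le_coord v r n : norm_le v r -> Cmod (v n) <= r.
Proof.
  intros [Hr H]. specialize (H n).
  assert (Cmod (v n) ^ 2 <= sqsum v n).
  { destruct n; [unfold sqsum; simpl; lra|].
    change (sqsum v (S n)) with (sqsum v n + Cmod (v (S n)) ^ 2). pose proof (sqsum_nonneg v n). lra. }
  pose proof (Cmod_ge_0 (v n)). unfold sqsum in *. nra.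
Qed.

Lemma norm_le_weaken v r s : norm_le v r -> r <= s -> norm_le v s.
Proof. intros [Hr H] Hrs. split; [lra|]. intros N. specialize (H N). nra. Qed.

Lemma norm_le_zero_vec r : 0 <= r -> norm_le (fun _ => (0:C)) r.
Proof.
  intros Hr. split; auto. intros N. rewrite sum_eq_R0; [nra|]. intros. rewrite Cmod_0. ring.
Qed.

Lemma norm_le_0_eq v : norm_le v 0 -> forall n, v n = (0:C).
Proof.
  intros H n. apply Cmod_eq_0. pose proof (norm_le_coord v 0 n H). pose proof (Cmod_ge_0 (v n)). lra.
Qed.

Lemma norm_le_dominated u v r :
  (forall n, Cmod (v n) <= Cmod (u n)) -> norm_le u r -> norm_le v r.
Proof.
  intros Hd [Hr H]. split; auto. intros N. eapply Rle_trans; [|apply (H N)].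
  apply sum_Rle. intros n _. pose proof (Hd n). pose proof (Cmod_ge_0 (v n)). nra.
Qed.

Lemma norm_le_scal c v r : norm_le v r -> norm_le (fun n => Cmult c (v n)) (Cmod c * r).
Proof.
  intros [Hr H]. pose proof (Cmod_ge_0 c). split; [nra|]. intros N.
  replace (sum_f_R0 (fun n => Cmod (Cmult c (v n)) ^ 2) N)
    with (sum_f_R0 (fun n => Cmod (v n) ^ 2) N * Cmod c ^ 2).
  - replace ((Cmod c * r) ^ 2) with (r ^ 2 * Cmod c ^ 2) by ring.
    apply Rmult_le_compat_r; [nra | apply H].
  - rewrite <- sum_f_R0_scal_r. apply sum_eq. intros i _. rewrite Cmod_mult. ring.
Qed.

Lemma sqr_plus_le_weighted p q r s : 0 < r -> 0 < s ->
  (p + q) ^ 2 <= (1 + s / r) * p ^ 2 + (1 + r / s) * q ^ 2.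
Proof.
  intros Hr Hs.
  assert (0 <= (s * p - r * q) ^ 2 / (r * s)).
  { apply Rdiv_le_0_compat; [apply pow2_ge_0 | nra]. }
  replace ((1 + s / r) * p ^ 2 + (1 + r / s) * q ^ 2)
    with ((p + q) ^ 2 + (s * p - r * q) ^ 2 / (r * s)) by (field; lra).
  lra.
Qed.

(* Minkowski's inequality, from the weighted AM-GM bound with weight s/r. *)
Lemma norm_le_add u v r s : norm_le u r -> norm_le v s ->
  norm_le (fun n => Cplus (u n) (v n)) (r + s).
Proof.
  intros Hu Hv. pose proof (norm_le_nonneg _ _ Hu). pose proof (norm_le_nonneg _ _ Hv).
  destruct (Req_dec r 0) as [->|Hr].
  { eapply norm_le_weaken; [eapply norm_le_dominated; [|exact Hv] | lra].
    intros n. rewrite (norm_le_0_eq u Hu), Cplus_0_l. lra. }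
  destruct (Req_dec s 0) as [->|Hs].
  { eapply norm_le_weaken; [eapply norm_le_dominated; [|exact Hu] | lra].
    intros n. rewrite (norm_le_0_eq v Hv), Cplus_0_r. lra. }
  destruct Hu as [_ Hu], Hv as [_ Hv]. split; [lra|]. intros N.
  apply Rle_trans with
    (sum_f_R0 (fun n => Cmod (u n) ^ 2 * (1 + s / r) + Cmod (v n) ^ 2 * (1 + r / s)) N).
  - apply sum_Rle. intros n _.
    pose proof (Cmod_triangle (u n) (v n)). pose proof (Cmod_ge_0 (Cplus (u n) (v n))).
    pose proof (Cmod_ge_0 (u n)). pose proof (Cmod_ge_0 (v n)).
    pose proof (sqr_plus_le_weighted (Cmod (u n)) (Cmod (v n)) r s ltac:(lra) ltac:(lra)).
    nra.
  - rewrite plus_sum, !sum_f_R0_scal_r.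
    assert (0 < s / r) by (apply Rdiv_lt_0_compat; lra).
    assert (0 < r / s) by (apply Rdiv_lt_0_compat; lra).
    apply Rle_trans with (r ^ 2 * (1 + s / r) + s ^ 2 * (1 + r / s)).
    + apply Rplus_le_compat; apply Rmult_le_compat_r; auto; lra.
    + right. field. lra.
Qed.

Lemma norm_le_sum (f : nat -> vec) (r : nat -> R) d :
  (forall i, (i <= d)%nat -> norm_le (f i) (r i)) ->
  norm_le (fun n => sum_n (fun i => f i n) d) (sum_f_R0 r d).
Proof.
  induction d; intros H.
  - rewrite Csum_vec_O. apply H. lia.
  - rewrite Csum_vec_S. apply norm_le_add; [apply IHd; intros|]; apply H; lia.
Qed.

Lemma vsub_split u v w : vsub u w = (fun n => Cplus (vsub u v n) (vsub v w n)).
Proof. apply functional_extensionality. intros n. unfold vsub. Cring. Qed.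

Lemma hnorm_nonneg x : 0 <= hnorm x.
Proof. apply sqrt_pos. Qed.

Lemma sqsum_le_Series x : l2 x -> forall N, sqsum x N <= Series (fun n => Cmod (x n) ^ 2).
Proof.
  intros Hx N. apply Series_correct in Hx. unfold sqsum. rewrite <- sum_n_Reals.
  apply (is_lim_seq_incr_compare _ _ Hx). intros n. rewrite !sum_n_Reals. apply sqsum_le_S.
Qed.

Lemma norm_le_hnorm x : l2 x -> norm_le x (hnorm x).
Proof.
  intros Hx. split; [apply hnorm_nonneg|]. intros N.
  pose proof (sqsum_le_Series x Hx N). pose proof (sqsum_nonneg x N).
  unfold hnorm. rewrite pow2_sqrt by lra. auto.
Qed.

Lemma norm_le_l2 x r : norm_le x r -> l2 x.
Proof.
  intros [_ H].
  destruct (ex_finite_lim_seq_incr (sum_n (fun n => Cmod (x n) ^ 2)) (r ^ 2)) as [l Hl].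
  - intros n. rewrite !sum_n_Reals. apply sqsum_le_S.
  - intros n. rewrite sum_n_Reals. apply H.
  - now exists l.
Qed.

Lemma hnorm_le x r : norm_le x r -> hnorm x <= r.
Proof.
  intros Hn. pose proof (Series_correct _ (norm_le_l2 _ _ Hn)) as Hx. destruct Hn as [Hr H].
  assert (Rbar_le (Series (fun n => Cmod (x n) ^ 2)) (r ^ 2)).
  { apply (is_lim_seq_le (sum_n (fun n => Cmod (x n) ^ 2)) (fun _ => r ^ 2)); [|exact Hx|].
    - intros n. rewrite sum_n_Reals. apply H.
    - apply is_lim_seq_const. }
  unfold hnorm. rewrite <- (sqrt_pow2 r Hr). now apply sqrt_le_1_alt.
Qed.

Lemma eq0_of_small (z : C) K : (forall e, 0 < e -> Cmod z <= e * K) -> z = (0:C).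
Proof.
  intros H. apply Cmod_eq_0. pose proof (Cmod_ge_0 z).
  assert (HK : 0 <= K) by (specialize (H 1 Rlt_0_1); lra).
  destruct (Req_dec (Cmod z) 0) as [|Hz]; auto.
  set (e := Cmod z / (2 * (K + 1))).
  assert (He : 0 < e) by (apply Rdiv_lt_0_compat; lra).
  assert (e * K < Cmod z).
  { assert (e * (2 * (K + 1)) = Cmod z) by (unfold e; field; lra). nra. }
  specialize (H e He). lra.
Qed.

Lemma Cminus_eq0 (u v : C) : Cminus u v = (0:C) -> u = v.
Proof. intros H. replace u with (Cplus (Cminus u v) v) by Cring. rewrite H. Cring. Qed.

Lemma basis_eq k n : basis k n = if Nat.eqb n k then (1:C) else (0:C).
Proof. reflexivity. Qed.

Lemma basis_norm_le k : norm_le (basis k) 1.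
Proof.
  apply (norm_le_dominated (fun n => if Nat.eqb n k then (1:C) else (0:C))).
  { intros n. rewrite basis_eq. lra. }
  split; [lra|]. intros N.
  destruct (Nat.le_gt_cases k N) as [HkN|HNk].
  - rewrite (sum_eq _ (fun n => if Nat.eqb n k then 1 else 0)).
    2: { intros n _. destruct (Nat.eqb n k); [rewrite Cmod_1 | rewrite Cmod_0]; ring. }
    induction HkN.
    + destruct k; simpl; [lra|]. rewrite Nat.eqb_refl, sum_eq_R0; [lra|].
      intros n Hn. destruct (Nat.eqb_spec n (S k)); [lia | reflexivity].
    + rewrite tech5. destruct (Nat.eqb_spec (S m) k); [lia|]. lra.
  - rewrite sum_eq_R0; [lra|]. intros n Hn. destruct (Nat.eqb_spec n k); [lia|]. rewrite Cmod_0. ring.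
Qed.

Lemma hnorm_basis_le k : hnorm (basis k) <= 1.
Proof. apply hnorm_le, basis_norm_le. Qed.

Lemma l2_basis k : l2 (basis k).
Proof. eapply norm_le_l2, basis_norm_le. Qed.

Lemma op_pow_succ_r (A : op) i x : op_pow A (S i) x = op_pow A i (A x).
Proof. apply Nat.iter_succ_r. Qed.

Lemma op_pow_add (A : op) i j x : op_pow A i (op_pow A j x) = op_pow A (i + j) x.
Proof. induction i; simpl; congruence. Qed.

Definition additive (A : op) : Prop :=
  forall u v, A (fun n => Cplus (u n) (v n)) = fun n => Cplus (A u n) (A v n).
Definition homogeneous (A : op) : Prop :=
  forall c u, A (fun n => Cmult c (u n)) = fun n => Cmult c (A u n).
Definition causal (A : op) : Prop :=
  forall x y N, (forall n, (n <= N)%nat -> x n = y n) -> forall n, (n <= N)%nat -> A x n = A y n.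

Lemma additive_sum (A : op) : additive A -> forall (f : nat -> vec) d,
  A (fun n => sum_n (fun i => f i n) d) = fun n => sum_n (fun i => A (f i) n) d.
Proof.
  intros HA f d. induction d.
  - now rewrite !Csum_vec_O.
  - rewrite !Csum_vec_S, HA, IHd. reflexivity.
Qed.

Lemma linear_vsub (A : op) : additive A -> homogeneous A ->
  forall u v, A (vsub u v) = vsub (A u) (A v).
Proof.
  intros Hadd Hhom u v.
  replace (vsub u v) with (fun n => Cplus (u n) ((fun m => Cmult (Copp 1) (v m)) n)).
  - rewrite Hadd, Hhom. apply functional_extensionality. intros n. unfold vsub. Cring.
  - apply functional_extensionality. intros n. unfold vsub. Cring.
Qed.

Lemma additive_pow A j : additive A -> additive (op_pow A j).
Proof. intros HA u v. induction j; [reflexivity|]. simpl. now rewrite IHj. Qed.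

Lemma homogeneous_pow A j : homogeneous A -> homogeneous (op_pow A j).
Proof. intros HA c u. induction j; [reflexivity|]. simpl. now rewrite IHj. Qed.

Lemma causal_comp A B : causal A -> causal B -> causal (op_comp A B).
Proof.
  intros HA HB x y N H n Hn. apply (HA _ _ N); auto. intros. apply (HB _ _ N); auto.
Qed.

Lemma causal_pow A j : causal A -> causal (op_pow A j).
Proof.
  intros HA. induction j; intros x y N H n Hn; [now apply H|].
  exact (causal_comp A (op_pow A j) HA IHj x y N H n Hn).
Qed.

Lemma sqsum_shifted_le j : forall (f w : vec) K N, 0 <= K ->
  (forall n, (n < j)%nat -> f n = (0:C)) -> (forall n, Cmod (f (n + j)%nat) <= K * Cmod (w n)) ->
  sqsum f N <= K ^ 2 * sqsum w N.
Proof.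
  induction j; intros f w K N HK H0 H1.
  - unfold sqsum. rewrite Rmult_comm, <- sum_f_R0_scal_r. apply sum_Rle. intros n _. specialize (H1 n).
    rewrite Nat.add_0_r in H1. pose proof (Cmod_ge_0 (f n)). nra.
  - destruct N as [|N].
    + unfold sqsum. simpl. rewrite H0, Cmod_0 by lia. pose proof (pow2_ge_0 (Cmod (w 0%nat))). nra.
    + unfold sqsum. rewrite decomp_sum by lia. simpl pred. rewrite H0, Cmod_0 by lia.
      apply Rle_trans with (K ^ 2 * sqsum w N).
      * replace (0 ^ 2) with 0 by ring. rewrite Rplus_0_l.
        apply (IHj (fun n => f (S n)) w K N HK); [intros; apply H0; lia|].
        intros n. replace (S (n + j)) with (n + S j)%nat by lia. auto.
      * apply Rmult_le_compat_l; [apply pow2_ge_0 | apply sqsum_le_S].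
Qed.

Section WeightedShift.
Variable a : nat -> C.
Notation T := (wshift a).

Lemma wshift_additive : additive T.
Proof. intros u v. apply functional_extensionality. intros [|n]; simpl; Cring. Qed.

Lemma wshift_homogeneous : homogeneous T.
Proof. intros c u. apply functional_extensionality. intros [|n]; simpl; Cring. Qed.

Lemma wshift_causal : causal T.
Proof. intros x y N H [|n] Hn; simpl; [reflexivity|]. rewrite H by lia. reflexivity. Qed.

Lemma wshift_pow_comm j x : T (op_pow T j x) = op_pow T j (T x).
Proof. exact (op_pow_succ_r T j x). Qed.

(* [wprod a m j = a_m a_(m+1) ... a_(m+j-1)], so that [T^j e_m = wprod a m j e_(m+j)]. *)
Fixpoint wprod (m j : nat) : C :=
  match j with O => 1 | S j' => Cmult (wprod m j') (a (m + j')%nat) end.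

Lemma wshift_pow_coord j w n : op_pow T j w n =
  if Nat.leb j n then Cmult (wprod (n - j) j) (w (n - j)%nat) else (0:C).
Proof.
  revert n. induction j; intros n.
  - simpl. rewrite Nat.sub_0_r. Cring.
  - destruct n as [|n]; [reflexivity|].
    change (op_pow T (S j) w (S n)) with (Cmult (a n) (op_pow T j w n)).
    rewrite IHj. simpl Nat.leb. destruct (Nat.leb j n) eqn:E; [|Cring].
    apply Nat.leb_le in E. replace (S n - S j)%nat with (n - j)%nat by lia. simpl wprod.
    replace (n - j + j)%nat with n by lia. Cring.
Qed.

Lemma wshift_pow_basis0 j : op_pow T j (basis 0) = fun n => Cmult (wprod 0 j) (basis j n).
Proof.
  apply functional_extensionality. intros n. rewrite wshift_pow_coord, !basis_eq.
  destruct (Nat.leb_spec j n), (Nat.eqb_spec n j); try (subst; rewrite Nat.sub_diag); simpl; try Cring.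
  - destruct (Nat.eqb_spec (n - j) 0); [lia | Cring].
  - lia.
Qed.

Lemma wshift_pow_basis0_self j : op_pow T j (basis 0) j = wprod 0 j.
Proof. rewrite wshift_pow_basis0, basis_eq, Nat.eqb_refl. Cring. Qed.

Hypothesis ha0 : forall n, a n <> (0:C).

Lemma wprod_neq0 m j : wprod m j <> (0:C).
Proof.
  induction j; simpl; [|now apply Cmult_neq_0].
  intros H. injection H. lra.
Qed.

Lemma basis_eq_wshift_pow i : basis i = fun n => Cmult (/ wprod 0 i) (op_pow T i (basis 0) n).
Proof.
  rewrite wshift_pow_basis0. apply functional_extensionality. intros n.
  rewrite Cmult_assoc, Cinv_l, Cmult_1_l by apply wprod_neq0. reflexivity.
Qed.

Hypothesis hdec : forall n, Cmod (a (S n)) <= Cmod (a n).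

Lemma weight_antitone p q : (q <= p)%nat -> Cmod (a p) <= Cmod (a q).
Proof. induction 1; [lra|]. eapply Rle_trans; [apply hdec | auto]. Qed.

Lemma wprod_le m j : Cmod (wprod m j) <= Cmod (wprod 0 j).
Proof.
  induction j; simpl; [lra|]. rewrite !Cmod_mult.
  apply Rmult_le_compat; try apply Cmod_ge_0; auto. apply weight_antitone. lia.
Qed.

Lemma wprod_succ_le m i : Cmod (wprod m (S i)) <= Cmod (a i) * Cmod (wprod 0 i).
Proof.
  simpl. rewrite Cmod_mult, Rmult_comm.
  apply Rmult_le_compat; try apply Cmod_ge_0; [apply weight_antitone; lia | apply wprod_le].
Qed.

Lemma wshift_pow_norm_le_by j w r K : norm_le w r -> 0 <= K ->
  (forall m, Cmod (wprod m j) <= K) -> norm_le (op_pow T j w) (K * r).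
Proof.
  intros [Hr Hw] HK Hpr. split; [nra|]. intros N.
  apply Rle_trans with (K ^ 2 * sqsum w N).
  - apply sqsum_shifted_le with j; auto.
    + intros n Hn. rewrite wshift_pow_coord. destruct (Nat.leb_spec j n); [lia | reflexivity].
    + intros n. rewrite wshift_pow_coord. destruct (Nat.leb_spec j (n + j)); [|lia].
      replace (n + j - j)%nat with n by lia. rewrite Cmod_mult.
      apply Rmult_le_compat_r; [apply Cmod_ge_0 | auto].
  - replace ((K * r) ^ 2) with (K ^ 2 * r ^ 2) by ring.
    apply Rmult_le_compat_l; [apply pow2_ge_0 | apply Hw].
Qed.

Lemma wshift_pow_norm_le j w r : norm_le w r -> norm_le (op_pow T j w) (Cmod (wprod 0 j) * r).
Proof.
  intros H. apply wshift_pow_norm_le_by; auto; [apply Cmod_ge_0|]. intros m. now apply wprod_le.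
Qed.

Lemma l2_wshift_pow j x : l2 x -> l2 (op_pow T j x).
Proof. intros Hx. eapply norm_le_l2, wshift_pow_norm_le, norm_le_hnorm, Hx. Qed.

End WeightedShift.

(* Polynomials in [T] with a constant term allowed. The [poly_op] approximants of [A_T] are the
   [tpoly] composed with [T] ([poly_op_eq_tpoly]), so [A_T] inherits the closure properties below. *)
Definition tpoly (a c : nat -> C) (d : nat) : op :=
  fun x n => sum_n (fun m => Cmult (c m) (op_pow (wshift a) m x n)) d.

Definition is_tpoly (a : nat -> C) (Z : op) : Prop := exists c d, Z = tpoly a c d.

Definition bounded_op (A : op) : Prop :=
  exists K, 0 <= K /\ forall v r, norm_le v r -> norm_le (A v) (K * r).

Section TPoly.
Variable a : nat -> C.
Notation T := (wshift a).

Lemma tpoly_additive c d : additive (tpoly a c d).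
Proof.
  intros u v. apply functional_extensionality. intros n. unfold tpoly. rewrite <- Csum_plus.
  apply Csum_ext. intros i _. rewrite (additive_pow _ i (wshift_additive a)). Cring.
Qed.

Lemma tpoly_homogeneous c d : homogeneous (tpoly a c d).
Proof.
  intros e u. apply functional_extensionality. intros n. unfold tpoly. rewrite <- Csum_scal_l.
  apply Csum_ext. intros i _. rewrite (homogeneous_pow _ i (wshift_homogeneous a)). Cring.
Qed.

Lemma tpoly_causal c d : causal (tpoly a c d).
Proof.
  intros x y N H n Hn. apply Csum_ext. intros i _.
  now rewrite (causal_pow _ i (wshift_causal a) x y N H n Hn).
Qed.

Lemma tpoly_wshift_comm c d x : tpoly a c d (T x) = T (tpoly a c d x).
Proof.
  apply functional_extensionality. intros [|n]; unfold tpoly.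
  - apply Csum_eq0. intros i _. rewrite <- wshift_pow_comm. cbn [wshift]. Cring.
  - change (T (fun n => sum_n (fun m => Cmult (c m) (op_pow T m x n)) d) (S n))
      with (Cmult (a n) (sum_n (fun m => Cmult (c m) (op_pow T m x n)) d)).
    rewrite <- Csum_scal_l. apply Csum_ext. intros i _. rewrite <- wshift_pow_comm. simpl. Cring.
Qed.

Lemma poly_op_eq_tpoly c d : poly_op a c d = op_comp (tpoly a c d) T.
Proof. op_ext. apply Csum_ext. intros i _. now rewrite op_pow_succ_r. Qed.

Lemma is_tpoly_id : is_tpoly a (fun x => x).
Proof. exists (fun _ => (1:C)), 0%nat. op_ext. unfold tpoly. rewrite Csum_O. simpl. Cring. Qed.

Lemma is_tpoly_wshift_pow j : is_tpoly a (op_pow T j).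
Proof.
  exists (fun m => if Nat.eqb m j then (1:C) else (0:C)), j. op_ext. unfold tpoly.
  rewrite (Csum_single _ j j); [simpl; rewrite Nat.eqb_refl; Cring | lia|].
  intros i _ Hi. destruct (Nat.eqb_spec i j); [lia | Cring].
Qed.

Lemma is_tpoly_add Z1 Z2 : is_tpoly a Z1 -> is_tpoly a Z2 -> is_tpoly a (op_add Z1 Z2).
Proof.
  intros [c1 [d1 ->]] [c2 [d2 ->]].
  exists (fun m => Cplus (if Nat.leb m d1 then c1 m else (0:C)) (if Nat.leb m d2 then c2 m else (0:C))),
    (d1 + d2)%nat.
  op_ext. unfold op_add, tpoly.
  rewrite <- (Csum_pad _ d1 (d1 + d2)), <- (Csum_pad _ d2 (d1 + d2)), <- Csum_plus by lia.
  apply Csum_ext. intros i _. destruct (Nat.leb i d1), (Nat.leb i d2); Cring.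
Qed.

Lemma is_tpoly_scal e Z : is_tpoly a Z -> is_tpoly a (op_scal e Z).
Proof.
  intros [c [d ->]]. exists (fun m => Cmult e (c m)), d. op_ext. unfold op_scal, tpoly.
  rewrite <- Csum_scal_l. apply Csum_ext. intros. Cring.
Qed.

Lemma is_tpoly_wshift_comp Z : is_tpoly a Z -> is_tpoly a (op_comp T Z).
Proof.
  intros [c [d ->]]. exists (fun m => match m with O => (0:C) | S m' => c m' end), (S d).
  op_ext. unfold op_comp, tpoly. rewrite (additive_sum T (wshift_additive a)), Csum_shift.
  simpl. rewrite Cmult_0_l, Cplus_0_l. apply Csum_ext. intros i _.
  now rewrite (wshift_homogeneous a).
Qed.

Lemma is_tpoly_wshift_pow_comp j Z : is_tpoly a Z -> is_tpoly a (op_comp (op_pow T j) Z).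
Proof.
  intros HZ. induction j; [exact HZ|].
  exact (is_tpoly_wshift_comp _ IHj).
Qed.

Lemma is_tpoly_sum (G : nat -> op) d : (forall i, (i <= d)%nat -> is_tpoly a (G i)) ->
  is_tpoly a (fun x n => sum_n (fun i => G i x n) d).
Proof.
  induction d; intros H.
  - replace (fun x n => sum_n (fun i => G i x n) 0) with (G 0%nat); [apply H; lia|].
    apply functional_extensionality. intros x. now rewrite Csum_vec_O.
  - replace (fun x n => sum_n (fun i => G i x n) (S d))
      with (op_add (fun x n => sum_n (fun i => G i x n) d) (G (S d))).
    + apply is_tpoly_add; [apply IHd; intros|]; apply H; lia.
    + apply functional_extensionality. intros x. now rewrite Csum_vec_S.
Qed.

Lemma is_tpoly_comp Z1 Z2 : is_tpoly a Z1 -> is_tpoly a Z2 -> is_tpoly a (op_comp Z1 Z2).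
Proof.
  intros [c [d ->]] HZ2.
  apply (is_tpoly_sum (fun i x n => Cmult (c i) (op_pow T i (Z2 x) n))). intros i _.
  apply (is_tpoly_scal (c i) (op_comp (op_pow T i) Z2)), is_tpoly_wshift_pow_comp, HZ2.
Qed.

Lemma is_tpoly_poly_op c d : is_tpoly a (poly_op a c d).
Proof.
  rewrite poly_op_eq_tpoly. apply is_tpoly_comp; [now exists c, d | apply (is_tpoly_wshift_pow 1)].
Qed.

Lemma poly_op_of_tpoly Z : is_tpoly a Z -> exists c d, op_comp Z T = poly_op a c d.
Proof. intros [c [d ->]]. exists c, d. now rewrite poly_op_eq_tpoly. Qed.

Hypothesis hdec : forall n, Cmod (a (S n)) <= Cmod (a n).

Lemma tpoly_norm_le c d v r : norm_le v r ->
  norm_le (tpoly a c d v) (sum_f_R0 (fun m => Cmod (c m) * Cmod (wprod a 0 m)) d * r).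
Proof.
  intros Hv. rewrite <- sum_f_R0_scal_r.
  apply (norm_le_sum (fun m n => Cmult (c m) (op_pow T m v n))). intros m _.
  rewrite Rmult_assoc. now apply norm_le_scal, wshift_pow_norm_le.
Qed.

Lemma is_tpoly_bounded Z : is_tpoly a Z -> bounded_op Z.
Proof.
  intros [c [d ->]]. eexists. split; [|intros; now apply tpoly_norm_le].
  apply cond_pos_sum. intros. apply Rmult_le_pos; apply Cmod_ge_0.
Qed.

End TPoly.

Lemma op_close_of_eq A B e : 0 <= e -> (forall x, l2 x -> A x = B x) -> op_close A B e.
Proof.
  intros He H x Hx. rewrite H by auto.
  replace (vsub (B x) (B x)) with (fun _ : nat => (0:C)).
  - apply norm_le_zero_vec, Rmult_le_pos; [auto | apply hnorm_nonneg].
  - apply functional_extensionality. intros n. unfold vsub. Cring.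
Qed.

Lemma op_close_trans A B C' e1 e2 : op_close A B e1 -> op_close B C' e2 -> op_close A C' (e1 + e2).
Proof.
  intros H1 H2 x Hx. rewrite (vsub_split _ (B x)), Rmult_plus_distr_r. apply norm_le_add; auto.
Qed.

Lemma op_close_sym A B e : op_close A B e -> op_close B A e.
Proof.
  intros H x Hx. replace (vsub (B x) (A x)) with (fun n => Cmult (Copp 1) (vsub (A x) (B x) n)).
  - replace (e * hnorm x) with (Cmod (Copp 1) * (e * hnorm x)) by (rewrite Cmod_m1; ring).
    now apply norm_le_scal, H.
  - apply functional_extensionality. intros n. unfold vsub. Cring.
Qed.

Lemma op_close_weaken A B e1 e2 : op_close A B e1 -> e1 <= e2 -> op_close A B e2.
Proof.
  intros H He x Hx. eapply norm_le_weaken; [now apply H|].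
  apply Rmult_le_compat_r; [apply hnorm_nonneg | exact He].
Qed.

Lemma op_close_coord A B e x n : op_close A B e -> l2 x -> Cmod (Cminus (A x n) (B x n)) <= e * hnorm x.
Proof. intros H Hx. exact (norm_le_coord _ _ n (H x Hx)). Qed.

Lemma op_close_add X X' Y Y' e1 e2 : op_close X X' e1 -> op_close Y Y' e2 ->
  op_close (op_add X Y) (op_add X' Y') (e1 + e2).
Proof.
  intros H1 H2 x Hx.
  replace (vsub (op_add X Y x) (op_add X' Y' x))
    with (fun n => Cplus (vsub (X x) (X' x) n) (vsub (Y x) (Y' x) n)).
  - rewrite Rmult_plus_distr_r. apply norm_le_add; auto.
  - apply functional_extensionality. intros n. unfold vsub, op_add. Cring.
Qed.

Lemma op_close_scal c X X' e : op_close X X' e -> op_close (op_scal c X) (op_scal c X') (Cmod c * e).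
Proof.
  intros H x Hx.
  replace (vsub (op_scal c X x) (op_scal c X' x)) with (fun n => Cmult c (vsub (X x) (X' x) n)).
  - rewrite Rmult_assoc. now apply norm_le_scal, H.
  - apply functional_extensionality. intros n. unfold vsub, op_scal. Cring.
Qed.

Lemma bounded_op_comp A B : bounded_op A -> bounded_op B -> bounded_op (op_comp A B).
Proof.
  intros [KA [HA A']] [KB [HB B']]. exists (KA * KB). split; [nra|].
  intros v r Hv. rewrite Rmult_assoc. apply A', B', Hv.
Qed.

Lemma bounded_op_l2 A x : bounded_op A -> l2 x -> l2 (A x).
Proof. intros [K [_ HK]] Hx. eapply norm_le_l2, HK, norm_le_hnorm, Hx. Qed.

(* [A X - A' X' = (A - A') X + A' (X - X')]. *)
Lemma op_close_comp A A' X X' B K eA eX :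
  0 <= eA -> op_close A A' eA -> (forall v r, norm_le v r -> norm_le (X v) (B * r)) ->
  op_close X X' eX -> (forall v r, norm_le v r -> norm_le (A' v) (K * r)) ->
  (forall u v, l2 u -> l2 v -> A' (vsub u v) = vsub (A' u) (A' v)) ->
  (forall x, l2 x -> l2 (X' x)) ->
  op_close (op_comp A X) (op_comp A' X') (eA * B + K * eX).
Proof.
  intros HeA HA HX HXX' HA' Hlin HX' x Hx. unfold op_comp.
  pose proof (HX x _ (norm_le_hnorm x Hx)) as HXx. pose proof (norm_le_l2 _ _ HXx) as HXx2.
  rewrite (vsub_split _ (A' (X x))), <- Hlin by auto.
  replace ((eA * B + K * eX) * hnorm x) with (eA * (B * hnorm x) + K * (eX * hnorm x)) by ring.
  apply norm_le_add.
  - eapply norm_le_weaken; [now apply HA|]. apply Rmult_le_compat_l, hnorm_le; auto.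
  - now apply HA', HXX'.
Qed.

Lemma mul_div_succ_le K e : 0 <= K -> 0 <= e -> K * (e / (K + 1)) <= e.
Proof.
  intros HK He. replace (K * (e / (K + 1))) with (e - e / (K + 1)) by (field; lra).
  assert (0 <= e / (K + 1)) by (apply Rdiv_le_0_compat; lra). lra.
Qed.

Lemma split_budget B K e : 0 <= B -> 0 <= K -> 0 < e -> e / 2 / (B + 1) * B + K * (e / 2 / (K + 1)) <= e.
Proof.
  intros HB HK He. rewrite Rmult_comm.
  pose proof (mul_div_succ_le B (e / 2) HB ltac:(lra)). pose proof (mul_div_succ_le K (e / 2) HK ltac:(lra)).
  lra.
Qed.

Lemma div_succ_pos K e : 0 <= K -> 0 < e -> 0 < e / (K + 1).
Proof. intros. apply Rdiv_lt_0_compat; lra. Qed.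

Section AlgebraAT.
Variable a : nat -> C.
Hypothesis hdec : forall n, Cmod (a (S n)) <= Cmod (a n).
Notation T := (wshift a).

Lemma poly_op_linear c d : additive (poly_op a c d) /\ homogeneous (poly_op a c d).
Proof.
  rewrite poly_op_eq_tpoly. split; unfold op_comp.
  - intros u v. rewrite wshift_additive. apply tpoly_additive.
  - intros e u. rewrite wshift_homogeneous. apply tpoly_homogeneous.
Qed.

Lemma poly_op_vsub c d u v : poly_op a c d (vsub u v) = vsub (poly_op a c d u) (poly_op a c d v).
Proof. destruct (poly_op_linear c d). now apply linear_vsub. Qed.

Lemma poly_op_bounded c d : bounded_op (poly_op a c d).
Proof. apply (is_tpoly_bounded a hdec), is_tpoly_poly_op. Qed.

Lemma inAT_poly_op c d : inAT a (poly_op a c d).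
Proof. intros e He. exists c, d. apply op_close_of_eq; [lra | auto]. Qed.

Lemma inAT_of_tpoly Z : is_tpoly a Z -> inAT a (op_comp Z T).
Proof. intros HZ. destruct (poly_op_of_tpoly a Z HZ) as [c [d ->]]. apply inAT_poly_op. Qed.

Lemma inAT_wshift_pow j : (1 <= j)%nat -> inAT a (op_pow T j).
Proof.
  intros Hj. replace (op_pow T j) with (op_comp (op_pow T (j - 1)) T).
  - apply inAT_of_tpoly, is_tpoly_wshift_pow.
  - apply functional_extensionality. intros x. unfold op_comp.
    rewrite <- op_pow_succ_r. f_equal. lia.
Qed.

Lemma inAT_add A B : inAT a A -> inAT a B -> inAT a (op_add A B).
Proof.
  intros HA HB e He.
  destruct (HA (e / 2)) as [c1 [d1 H1]]; [lra|]. destruct (HB (e / 2)) as [c2 [d2 H2]]; [lra|].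
  assert (Htp : is_tpoly a (op_add (tpoly a c1 d1) (tpoly a c2 d2)))
    by (apply is_tpoly_add; [exists c1, d1 | exists c2, d2]; reflexivity).
  destruct (poly_op_of_tpoly a _ Htp) as [c [d Hcd]].
  exists c, d. rewrite <- Hcd. rewrite !poly_op_eq_tpoly in *.
  replace e with (e / 2 + e / 2) by field. exact (op_close_add _ _ _ _ _ _ H1 H2).
Qed.

Lemma inAT_scal c0 A : inAT a A -> inAT a (op_scal c0 A).
Proof.
  intros HA e He. pose proof (Cmod_ge_0 c0).
  destruct (HA (e / (Cmod c0 + 1))) as [c1 [d1 H1]]; [now apply div_succ_pos|].
  assert (Htp : is_tpoly a (op_scal c0 (tpoly a c1 d1))) by (apply is_tpoly_scal; now exists c1, d1).
  destruct (poly_op_of_tpoly a _ Htp) as [c [d Hcd]].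
  exists c, d. rewrite <- Hcd. rewrite poly_op_eq_tpoly in *.
  eapply op_close_weaken; [exact (op_close_scal c0 _ _ _ H1) | apply mul_div_succ_le; lra].
Qed.

Lemma inAT_bounded A : inAT a A -> bounded_op A.
Proof.
  intros HA. destruct (HA 1 Rlt_0_1) as [c [d H]]. destruct (poly_op_bounded c d) as [K [HK HP]].
  exists (1 + K). split; [lra|]. intros v r Hv.
  pose proof (norm_le_l2 _ _ Hv) as Hv2.
  replace (A v) with (fun n => Cplus (vsub (A v) (poly_op a c d v) n) (poly_op a c d v n)).
  - rewrite Rmult_plus_distr_r. apply norm_le_add; auto.
    eapply norm_le_weaken; [now apply H|]. rewrite !Rmult_1_l. now apply hnorm_le.
  - apply functional_extensionality. intros n. unfold vsub. Cring.
Qed.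

Lemma inAT_comp A X : inAT a A -> inAT a X -> inAT a (op_comp A X).
Proof.
  intros HA HX e He. destruct (inAT_bounded X HX) as [B [HB HXB]].
  destruct (HA (e / 2 / (B + 1))) as [c1 [d1 H1]]; [apply div_succ_pos; lra|].
  destruct (poly_op_bounded c1 d1) as [K [HK HP]].
  destruct (HX (e / 2 / (K + 1))) as [c2 [d2 H2]]; [apply div_succ_pos; lra|].
  assert (Htp : is_tpoly a (tpoly a c2 d2)) by now exists c2, d2.
  destruct (poly_op_of_tpoly a _ (is_tpoly_comp a _ _ (is_tpoly_poly_op a c1 d1) Htp)) as [c [d Hcd]].
  exists c, d. rewrite <- Hcd.
  change (op_comp (op_comp (poly_op a c1 d1) (tpoly a c2 d2)) T)
    with (op_comp (poly_op a c1 d1) (op_comp (tpoly a c2 d2) T)).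
  rewrite <- poly_op_eq_tpoly.
  eapply op_close_weaken.
  - apply (op_close_comp _ _ _ _ B K _ _ (Rlt_le _ _ (div_succ_pos B (e / 2) HB ltac:(lra))) H1 HXB H2 HP).
    + intros. apply poly_op_vsub.
    + intros x Hx. exact (bounded_op_l2 _ x (poly_op_bounded c2 d2) Hx).
  - apply split_budget; lra.
Qed.

Lemma inAT_lin A x y c1 c2 : inAT a A -> l2 x -> l2 y ->
  A (fun n => Cplus (Cmult c1 (x n)) (Cmult c2 (y n))) =
  fun n => Cplus (Cmult c1 (A x n)) (Cmult c2 (A y n)).
Proof.
  intros HA Hx Hy. set (w := fun n => Cplus (Cmult c1 (x n)) (Cmult c2 (y n))).
  assert (Hw : l2 w).
  { eapply norm_le_l2, norm_le_add; apply norm_le_scal, norm_le_hnorm; eauto. }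
  apply functional_extensionality. intros n. apply Cminus_eq0.
  apply (eq0_of_small _ (hnorm w + Cmod c1 * hnorm x + Cmod c2 * hnorm y)).
  intros e He. destruct (HA e He) as [c [d H]]. set (P := poly_op a c d).
  assert (EP : P w = fun n => Cplus (Cmult c1 (P x n)) (Cmult c2 (P y n))).
  { destruct (poly_op_linear c d) as [Hadd Hhom]. unfold w, P. now rewrite Hadd, !Hhom. }
  replace (Cminus (A w n) (Cplus (Cmult c1 (A x n)) (Cmult c2 (A y n))))
    with (Cminus (Cminus (A w n) (P w n))
            (Cplus (Cmult c1 (Cminus (A x n) (P x n))) (Cmult c2 (Cminus (A y n) (P y n)))))
    by (rewrite EP; Cring).
  pose proof (op_close_coord A P e w n H Hw). pose proof (op_close_coord A P e x n H Hx).
  pose proof (op_close_coord A P e y n H Hy).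
  pose proof (Cmod_ge_0 c1). pose proof (Cmod_ge_0 c2).
  assert (Cmod c1 * Cmod (Cminus (A x n) (P x n)) <= Cmod c1 * (e * hnorm x))
    by (apply Rmult_le_compat_l; auto).
  assert (Cmod c2 * Cmod (Cminus (A y n) (P y n)) <= Cmod c2 * (e * hnorm y))
    by (apply Rmult_le_compat_l; auto).
  eapply Rle_trans; [apply Cmod_triangle|]. rewrite Cmod_opp.
  eapply Rle_trans; [apply Rplus_le_compat_l, Cmod_triangle|]. rewrite !Cmod_mult. nra.
Qed.

Lemma inAT_additive_l2 A x y : inAT a A -> l2 x -> l2 y ->
  A (fun n => Cplus (x n) (y n)) = fun n => Cplus (A x n) (A y n).
Proof.
  intros HA Hx Hy. pose proof (inAT_lin A x y 1 1 HA Hx Hy) as H.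
  replace (fun n => Cplus (x n) (y n)) with (fun n => Cplus (Cmult 1 (x n)) (Cmult 1 (y n))).
  - rewrite H. apply functional_extensionality. intros n. Cring.
  - apply functional_extensionality. intros n. Cring.
Qed.

Lemma inAT_homogeneous_l2 A c x : inAT a A -> l2 x -> A (fun n => Cmult c (x n)) = fun n => Cmult c (A x n).
Proof.
  intros HA Hx. pose proof (inAT_lin A x x c 0 HA Hx Hx) as H.
  replace (fun n => Cmult c (x n)) with (fun n => Cplus (Cmult c (x n)) (Cmult 0 (x n))).
  - rewrite H. apply functional_extensionality. intros n. Cring.
  - apply functional_extensionality. intros n. Cring.
Qed.

Lemma inAT_vsub_l2 A x y : inAT a A -> l2 x -> l2 y -> A (vsub x y) = vsub (A x) (A y).
Proof.
  intros HA Hx Hy. pose proof (inAT_lin A x y 1 (Copp 1) HA Hx Hy) as H.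
  replace (vsub x y) with (fun n => Cplus (Cmult 1 (x n)) (Cmult (Copp 1) (y n))).
  - rewrite H. apply functional_extensionality. intros n. unfold vsub. Cring.
  - apply functional_extensionality. intros n. unfold vsub. Cring.
Qed.

Lemma inAT_sum_l2 A (f : nat -> vec) d : inAT a A -> (forall i, (i <= d)%nat -> l2 (f i)) ->
  A (fun n => sum_n (fun i => f i n) d) = fun n => sum_n (fun i => A (f i) n) d.
Proof.
  intros HA. induction d; intros H.
  - now rewrite !Csum_vec_O.
  - assert (Hsum : l2 (fun n => sum_n (fun i => f i n) d)).
    { eapply norm_le_l2, (norm_le_sum f (fun i => hnorm (f i))).
      intros. apply norm_le_hnorm, H. lia. }
    rewrite !Csum_vec_S, inAT_additive_l2, IHd by (auto; intros; apply H; lia). reflexivity.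
Qed.

Lemma inAT_wshift_comm A x : inAT a A -> l2 x -> A (T x) = T (A x).
Proof.
  intros HA Hx. assert (HTx : l2 (T x)) by exact (l2_wshift_pow a hdec 1 x Hx).
  apply functional_extensionality. intros m. apply Cminus_eq0.
  apply (eq0_of_small _ (hnorm (T x) + Cmod (wprod a 0 1) * hnorm x)).
  intros e He. destruct (HA e He) as [c [d H]]. set (P := poly_op a c d).
  assert (HPT : P (T x) = T (P x)).
  { unfold P. rewrite poly_op_eq_tpoly. unfold op_comp. apply tpoly_wshift_comm. }
  replace (Cminus (A (T x) m) (T (A x) m))
    with (Cplus (vsub (A (T x)) (P (T x)) m) (T (vsub (P x) (A x)) m))
    by (rewrite HPT, (linear_vsub T (wshift_additive a) (wshift_homogeneous a)); unfold vsub; Cring).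
  eapply Rle_trans; [apply Cmod_triangle|].
  pose proof (op_close_coord A P e (T x) m H HTx).
  assert (Cmod (T (vsub (P x) (A x)) m) <= Cmod (wprod a 0 1) * (e * hnorm x)).
  { apply norm_le_coord, (wshift_pow_norm_le a hdec 1), op_close_sym; auto. }
  unfold vsub in *. nra.
Qed.

Lemma inAT_wshift_pow_comm A j x : inAT a A -> l2 x -> A (op_pow T j x) = op_pow T j (A x).
Proof.
  intros HA Hx. induction j; [reflexivity|]. simpl.
  rewrite inAT_wshift_comm, IHj by (auto; now apply l2_wshift_pow). reflexivity.
Qed.

Lemma inAT_tpoly_comm A c d x : inAT a A -> l2 x -> A (tpoly a c d x) = tpoly a c d (A x).
Proof.
  intros HA Hx. unfold tpoly at 1.
  rewrite (inAT_sum_l2 A (fun m n => Cmult (c m) (op_pow T m x n))); auto.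
  - apply functional_extensionality. intros n. apply Csum_ext. intros m _.
    rewrite inAT_homogeneous_l2, inAT_wshift_pow_comm by (auto; now apply l2_wshift_pow). reflexivity.
  - intros m _. eapply norm_le_l2, norm_le_scal, norm_le_hnorm, l2_wshift_pow; auto.
Qed.

Lemma inAT_causal_l2 X x y N n : inAT a X -> l2 x -> l2 y ->
  (forall m, (m <= N)%nat -> x m = y m) -> (n <= N)%nat -> X x n = X y n.
Proof.
  intros HX Hx Hy Hxy Hn. apply Cminus_eq0, (eq0_of_small _ (hnorm x + hnorm y)).
  intros e He. destruct (HX e He) as [c [d HP]].
  assert (HPxy : poly_op a c d x n = poly_op a c d y n).
  { rewrite poly_op_eq_tpoly.
    exact (causal_comp _ _ (tpoly_causal a c d) (wshift_causal a) x y N Hxy n Hn). }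
  replace (Cminus (X x n) (X y n))
    with (Cminus (Cminus (X x n) (poly_op a c d x n)) (Cminus (X y n) (poly_op a c d y n)))
    by (rewrite HPxy; Cring).
  eapply Rle_trans; [apply Cmod_triangle|]. rewrite Cmod_opp.
  pose proof (op_close_coord _ _ _ x n HP Hx). pose proof (op_close_coord _ _ _ y n HP Hy). nra.
Qed.

Lemma inAT_zero : inAT a op_zero.
Proof.
  replace op_zero with (poly_op a (fun _ => (0:C)) 0)
    by (op_ext; unfold poly_op, op_zero; rewrite Csum_O; Cring).
  apply inAT_poly_op.
Qed.

Lemma inAT_closed X : (forall e, 0 < e -> exists Y, inAT a Y /\ op_close X Y e) -> inAT a X.
Proof.
  intros HX e He. destruct (HX (e / 2)) as [Y [HY HXY]]; [lra|].
  destruct (HY (e / 2)) as [c [d HP]]; [lra|]. exists c, d.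
  replace e with (e / 2 + e / 2) by field. eapply op_close_trans; eauto.
Qed.

Lemma closed_ideal_inAT : closed_ideal a (inAT a).
Proof.
  split; [auto|]. split; [exact inAT_zero|]. split; [apply inAT_add|]. split; [apply inAT_scal|].
  split; [|exact inAT_closed]. intros A X HA HX. split; now apply inAT_comp.
Qed.

End AlgebraAT.

Lemma op_close_congr_r X Y Y' e : op_close X Y e -> (forall x, l2 x -> Y x = Y' x) -> op_close X Y' e.
Proof. intros H HY x Hx. rewrite <- HY by auto. now apply H. Qed.

Section Ideals.
Variable a : nat -> C.
Notation T := (wshift a).
Variable I : op -> Prop.
Hypothesis HI : closed_ideal a I.

Lemma closed_ideal_sum (G : nat -> op) d : (forall i, (i <= d)%nat -> I (G i)) ->
  I (fun x n => sum_n (fun i => G i x n) d).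
Proof.
  destruct HI as [_ [_ [Hadd _]]]. induction d; intros H.
  - replace (fun x n => sum_n (fun i => G i x n) 0) with (G 0%nat); [apply H; lia|].
    apply functional_extensionality. intros x. now rewrite Csum_vec_O.
  - replace (fun x n => sum_n (fun i => G i x n) (S d))
      with (op_add (fun x n => sum_n (fun i => G i x n) d) (G (S d))).
    + apply Hadd; [apply IHd; intros|]; apply H; lia.
    + apply functional_extensionality. intros x. now rewrite Csum_vec_S.
Qed.

Lemma closed_ideal_wshift_pow_comp j X : I X -> I (op_comp (op_pow T j) X).
Proof.
  intros HX. destruct j as [|j]; [exact HX|].
  destruct HI as [_ [_ [_ [_ [Hmul _]]]]].
  apply (Hmul (op_pow T (S j)) X); [apply inAT_wshift_pow; lia | exact HX].
Qed.

Lemma closed_ideal_tpoly_comp c d X : I X -> I (op_comp (tpoly a c d) X).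
Proof.
  intros HX. destruct HI as [_ [_ [_ [Hscal _]]]].
  apply (closed_ideal_sum (fun m x n => Cmult (c m) (op_pow T m (X x) n))). intros m _.
  apply (Hscal (c m) (op_comp (op_pow T m) X)), closed_ideal_wshift_pow_comp, HX.
Qed.

End Ideals.

Section MultipleClosure.
Variable a : nat -> C.
Hypothesis hdec : forall n, Cmod (a (S n)) <= Cmod (a n).
Notation T := (wshift a).
Variable S0 : op.
Hypothesis hS : inAT a S0.

(* The closure in [A_T] of the [Z S] with [Z] a [tpoly]: a closed ideal containing [S], hence [<S>]. *)
Definition tpoly_multiple_closure (X : op) : Prop :=
  inAT a X /\ forall e, 0 < e -> exists Z, is_tpoly a Z /\ op_close X (op_comp Z S0) e.

Lemma tpoly_multiple_closure_self : tpoly_multiple_closure S0.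
Proof.
  split; auto. intros e He. exists (fun x => x). split; [apply is_tpoly_id|].
  apply op_close_of_eq; [lra | reflexivity].
Qed.

Lemma tpoly_multiple_closure_add X Y :
  tpoly_multiple_closure X -> tpoly_multiple_closure Y -> tpoly_multiple_closure (op_add X Y).
Proof.
  intros [HX1 HX2] [HY1 HY2]. split; [now apply inAT_add|]. intros e He.
  destruct (HX2 (e / 2)) as [Z1 [HZ1 H1]]; [lra|]. destruct (HY2 (e / 2)) as [Z2 [HZ2 H2]]; [lra|].
  exists (op_add Z1 Z2). split; [now apply is_tpoly_add|].
  replace e with (e / 2 + e / 2) by field. exact (op_close_add _ _ _ _ _ _ H1 H2).
Qed.

Lemma tpoly_multiple_closure_scal c X : tpoly_multiple_closure X -> tpoly_multiple_closure (op_scal c X).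
Proof.
  intros [HX1 HX2]. pose proof (Cmod_ge_0 c). split; [now apply inAT_scal|]. intros e He.
  destruct (HX2 (e / (Cmod c + 1))) as [Z [HZ HXZ]]; [now apply div_succ_pos|].
  exists (op_scal c Z). split; [now apply is_tpoly_scal|].
  eapply op_close_weaken; [exact (op_close_scal c _ _ _ HXZ) | apply mul_div_succ_le; lra].
Qed.

Lemma tpoly_multiple_closure_comp_l A X : inAT a A ->
  tpoly_multiple_closure X -> tpoly_multiple_closure (op_comp A X).
Proof.
  intros HA [HX1 HX2]. split; [now apply inAT_comp|]. intros e He.
  destruct (inAT_bounded a hdec X HX1) as [B [HB HXB]].
  destruct (HA (e / 2 / (B + 1))) as [c [d HP]]; [apply div_succ_pos; lra|].
  destruct (poly_op_bounded a hdec c d) as [K [HK HPK]].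
  destruct (HX2 (e / 2 / (K + 1))) as [Z [HZ HXZ]]; [apply div_succ_pos; lra|].
  exists (op_comp (poly_op a c d) Z). split; [apply (is_tpoly_comp a); auto; apply is_tpoly_poly_op|].
  eapply op_close_weaken.
  - apply (op_close_comp _ _ _ _ B K _ _ (Rlt_le _ _ (div_succ_pos B (e / 2) HB ltac:(lra))) HP HXB HXZ HPK).
    + intros. apply poly_op_vsub.
    + intros x Hx. apply (bounded_op_l2 (op_comp Z S0)); auto.
      apply bounded_op_comp; [now apply (is_tpoly_bounded a) | now apply (inAT_bounded a)].
  - apply split_budget; lra.
Qed.

Lemma tpoly_multiple_closure_comp_r A X : inAT a A ->
  tpoly_multiple_closure X -> tpoly_multiple_closure (op_comp X A).
Proof.
  intros HA [HX1 HX2]. split; [now apply inAT_comp|]. intros e He.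
  destruct (inAT_bounded a hdec A HA) as [B [HB HAB]].
  destruct (HX2 (e / 2 / (B + 1))) as [Z [HZ HXZ]]; [apply div_succ_pos; lra|].
  assert (HZS : bounded_op (op_comp Z S0))
    by (apply bounded_op_comp; [now apply (is_tpoly_bounded a) | now apply (inAT_bounded a)]).
  destruct HZS as [K [HK HZSK]].
  destruct (HA (e / 2 / (K + 1))) as [c [d HP]]; [apply div_succ_pos; lra|].
  exists (op_comp Z (poly_op a c d)). split; [apply (is_tpoly_comp a); auto; apply is_tpoly_poly_op|].
  eapply op_close_congr_r; [eapply op_close_weaken|].
  - apply (op_close_comp _ _ _ _ B K _ _ (Rlt_le _ _ (div_succ_pos B (e / 2) HB ltac:(lra))) HXZ HAB HP HZSK).
    + intros u v Hu Hv. destruct HZ as [cz [dz ->]]. unfold op_comp.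
      rewrite (inAT_vsub_l2 a) by auto. apply linear_vsub; [apply tpoly_additive | apply tpoly_homogeneous].
    + intros x Hx. exact (bounded_op_l2 _ x (poly_op_bounded a hdec c d) Hx).
  - apply split_budget; lra.
  - intros x Hx. unfold op_comp. rewrite !poly_op_eq_tpoly. unfold op_comp.
    rewrite (inAT_tpoly_comm a hdec), (inAT_wshift_comm a hdec) by (auto; now apply (l2_wshift_pow a hdec 1)).
    reflexivity.
Qed.

Lemma tpoly_multiple_closure_closed X :
  (forall e, 0 < e -> exists Y, tpoly_multiple_closure Y /\ op_close X Y e) -> tpoly_multiple_closure X.
Proof.
  intros HX. split.
  - apply (inAT_closed a). intros e He. destruct (HX e He) as [Y [[HY _] HXY]]. now exists Y.
  - intros e He. destruct (HX (e / 2)) as [Y [[_ HY] HXY]]; [lra|].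
    destruct (HY (e / 2)) as [Z [HZ HYZ]]; [lra|]. exists Z. split; auto.
    replace e with (e / 2 + e / 2) by field. eapply op_close_trans; eauto.
Qed.

Lemma closed_ideal_tpoly_multiple_closure : closed_ideal a tpoly_multiple_closure.
Proof.
  assert (Hzero : op_zero = op_scal 0 S0)
    by (op_ext; unfold op_zero, op_scal; Cring).
  split; [now intros X []|]. split.
  { rewrite Hzero. apply tpoly_multiple_closure_scal, tpoly_multiple_closure_self. }
  split; [apply tpoly_multiple_closure_add|]. split; [apply tpoly_multiple_closure_scal|].
  split; [|apply tpoly_multiple_closure_closed].
  intros A X HA HX. split; [apply tpoly_multiple_closure_comp_l | apply tpoly_multiple_closure_comp_r]; auto.
Qed.

Lemma closed_span_orbit_of_wshift_pow_mem (ha0 : forall n, a n <> (0:C)) k :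
  gen_ideal a S0 (op_pow T k) -> in_closed_span_orbit a S0 k.
Proof.
  intros Hk. destruct (Hk _ closed_ideal_tpoly_multiple_closure tpoly_multiple_closure_self) as [_ HJ].
  set (b := wprod a 0 k). assert (Hb0 : b <> (0:C)) by apply wprod_neq0, ha0.
  assert (Hb : 0 < Cmod b) by now apply Cmod_gt_0.
  intros e He. destruct (HJ (e * Cmod b)) as [Z [[c [d ->]] HZ]]; [nra|].
  exists (fun m => Cmult (/ b) (c m)), d.
  change (fun n => sum_n (fun m => Cmult (Cmult (/ b) (c m)) (op_pow T m (S0 (basis 0)) n)) d)
    with (tpoly a (fun m => Cmult (/ b) (c m)) d (S0 (basis 0))).
  replace (vsub (basis k) (tpoly a (fun m => Cmult (/ b) (c m)) d (S0 (basis 0))))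
    with (fun n => Cmult (/ b) (vsub (op_pow T k (basis 0)) (tpoly a c d (S0 (basis 0))) n)).
  - eapply norm_le_weaken; [apply norm_le_scal, (HZ (basis 0) (l2_basis 0))|].
    rewrite Cmod_inv by exact Hb0.
    pose proof (hnorm_basis_le 0). pose proof (hnorm_nonneg (basis 0)).
    replace (/ Cmod b * (e * Cmod b * hnorm (basis 0))) with (e * hnorm (basis 0)) by (field; lra). nra.
  - apply functional_extensionality. intros n. rewrite wshift_pow_basis0. unfold vsub, tpoly.
    rewrite (Csum_ext (fun m => Cmult (Cmult (/ b) (c m)) (op_pow T m (S0 (basis 0)) n))
               (fun m => Cmult (/ b) (Cmult (c m) (op_pow T m (S0 (basis 0)) n)))) by (intros; Cring).
    rewrite Csum_scal_l. change (wprod a 0 k) with b.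
    Cfield. exact Hb0.
Qed.

End MultipleClosure.

Lemma count_below_le r d : sum_f_R0 (fun i => if Nat.ltb (S i) r then 1 else 0) d <= INR r.
Proof.
  enough (H : sum_f_R0 (fun i => if Nat.ltb (S i) r then 1 else 0) d <= INR (Nat.min (S d) r))
    by (eapply Rle_trans; [exact H | apply le_INR; lia]).
  induction d.
  - change (sum_f_R0 _ 0) with (if Nat.ltb 1 r then 1 else 0).
    destruct (Nat.ltb_spec 1 r); [rewrite Nat.min_l by lia; simpl; lra | apply pos_INR].
  - rewrite tech5. destruct (Nat.ltb_spec (S (S d)) r).
    + rewrite Nat.min_l in * by lia. rewrite (S_INR (S d)). lra.
    + rewrite Rplus_0_r. eapply Rle_trans; [exact IHd | apply le_INR; lia].
Qed.

Section VanishingCoordinates.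
Variable a : nat -> C.
Hypothesis hdec : forall n, Cmod (a (S n)) <= Cmod (a n).
Notation T := (wshift a).

Lemma poly_op_basis0_coord c d i : (i <= d)%nat ->
  poly_op a c d (basis 0) (S i) = Cmult (c i) (wprod a 0 (S i)).
Proof.
  intros Hi. unfold poly_op. rewrite (Csum_single _ d i Hi), wshift_pow_basis0, basis_eq, Nat.eqb_refl.
  - Cring.
  - intros l _ Hl. rewrite wshift_pow_basis0, basis_eq. destruct (Nat.eqb_spec (S i) (S l)); [lia | Cring].
Qed.

Lemma poly_op_coeff_small X c d eta i : 0 <= eta -> (i <= d)%nat -> op_close X (poly_op a c d) eta ->
  X (basis 0) (S i) = (0:C) -> Cmod (c i) * Cmod (wprod a 0 (S i)) <= eta.
Proof.
  intros Heta Hi HP HX. pose proof (op_close_coord _ _ _ (basis 0) (S i) HP (l2_basis 0)) as H.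
  rewrite HX, poly_op_basis0_coord in H by exact Hi.
  unfold Cminus in H. rewrite Cplus_0_l, Cmod_opp, Cmod_mult in H.
  pose proof (hnorm_basis_le 0). pose proof (hnorm_nonneg (basis 0)).
  nra.
Qed.

Definition drop_low (r : nat) (c : nat -> C) (i : nat) : C := if Nat.ltb (S i) r then (0:C) else c i.

Lemma closed_ideal_poly_op_drop_low I r c d : closed_ideal a I -> I (op_pow T r) ->
  I (poly_op a (drop_low r c) d).
Proof.
  intros HI HIr. pose proof HI as [_ [_ [_ [Hscal _]]]].
  apply (closed_ideal_sum a I HI (fun i x n => Cmult (drop_low r c i) (op_pow T (S i) x n))). intros i _.
  unfold drop_low. destruct (Nat.ltb_spec (S i) r).
  - replace (fun x n => Cmult 0 (op_pow T (S i) x n)) with (op_scal 0 (op_pow T r))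
      by (op_ext; unfold op_scal; Cring).
    apply Hscal, HIr.
  - apply (Hscal (c i) (op_pow T (S i))).
    replace (op_pow T (S i)) with (op_comp (op_pow T (S i - r)) (op_pow T r)).
    + apply (closed_ideal_wshift_pow_comp a I HI), HIr.
    + apply functional_extensionality. intros x. unfold op_comp. rewrite op_pow_add. f_equal. lia.
Qed.

(* The dropped terms [c_i T^(i+1)], [i + 1 < r], are at most [r] in number, each of norm [<= eta]. *)
Lemma poly_op_close_drop_low X r c d eta : 0 <= eta -> op_close X (poly_op a c d) eta ->
  (forall j, (1 <= j)%nat -> (j < r)%nat -> X (basis 0) j = (0:C)) ->
  op_close (poly_op a c d) (poly_op a (drop_low r c) d) (INR r * eta).
Proof.
  intros Heta HP Hz x Hx. pose proof (hnorm_nonneg x).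
  set (low := fun i => if Nat.ltb (S i) r then c i else (0:C)).
  replace (vsub (poly_op a c d x) (poly_op a (drop_low r c) d x))
    with (fun n => sum_n (fun i => Cmult (low i) (op_pow T (S i) x n)) d).
  2: { apply functional_extensionality. intros n. unfold vsub, poly_op. rewrite <- Csum_minus.
       apply Csum_ext. intros i _. unfold low, drop_low. destruct (Nat.ltb (S i) r); Cring. }
  apply norm_le_weaken with (sum_f_R0 (fun i => if Nat.ltb (S i) r then 1 else 0) d * (eta * hnorm x)).
  - rewrite <- sum_f_R0_scal_r.
    apply (norm_le_sum (fun i n => Cmult (low i) (op_pow T (S i) x n))). intros i Hi.
    unfold low. destruct (Nat.ltb_spec (S i) r).
    + eapply norm_le_weaken; [apply norm_le_scal, (wshift_pow_norm_le a hdec), norm_le_hnorm, Hx|].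
      rewrite <- Rmult_assoc, Rmult_1_l. apply Rmult_le_compat_r; [auto|].
      apply (poly_op_coeff_small X c d eta i Heta Hi HP), Hz; lia.
    + replace (fun n => Cmult 0 (op_pow T (S i) x n)) with (fun _ : nat => (0:C))
        by (apply functional_extensionality; intros; Cring).
      apply norm_le_zero_vec. lra.
  - rewrite <- Rmult_assoc. apply Rmult_le_compat_r; [auto|].
    apply Rmult_le_compat_r; [auto | apply count_below_le].
Qed.

Lemma closed_ideal_mem_of_coord_vanish I r X : closed_ideal a I -> I (op_pow T r) -> inAT a X ->
  (forall j, (1 <= j)%nat -> (j < r)%nat -> X (basis 0) j = (0:C)) -> I X.
Proof.
  intros HI HIr HX Hz. pose proof HI as [_ [_ [_ [_ [_ Hclosed]]]]].
  apply Hclosed. intros e He. pose proof (pos_INR r).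
  set (eta := e / (INR r + 1)). assert (Heta : 0 < eta) by (now apply div_succ_pos).
  destruct (HX eta Heta) as [c [d HP]].
  exists (poly_op a (drop_low r c) d). split; [now apply closed_ideal_poly_op_drop_low|].
  replace e with (eta + INR r * eta) by (unfold eta; field; lra).
  eapply op_close_trans; [exact HP | apply (poly_op_close_drop_low X); auto; lra].
Qed.

End VanishingCoordinates.

Lemma sum_mult_le_0 (p q : nat -> R) N : (forall i, 0 <= p i) -> (forall i, 0 <= q i) ->
  sum_f_R0 (fun i => p i ^ 2) N <= 0 -> sum_f_R0 (fun i => p i * q i) N <= 0.
Proof.
  intros Hp Hq. induction N; intros H.
  - simpl in *. pose proof (Hp 0%nat). pose proof (Hq 0%nat). nra.
  - rewrite tech5 in H |- *. pose proof (Hp (S N)). pose proof (Hq (S N)).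
    assert (0 <= sum_f_R0 (fun i => p i ^ 2) N) by (apply cond_pos_sum; intros; apply pow2_ge_0).
    assert (Hp0 : p (S N) = 0) by nra. rewrite Hp0, Rmult_0_l, Rplus_0_r. apply IHN. nra.
Qed.

Lemma sum_mult_le_Cauchy_Schwarz (p q : nat -> R) N R1 R2 :
  (forall i, 0 <= p i) -> (forall i, 0 <= q i) -> 0 <= R1 -> 0 <= R2 ->
  sum_f_R0 (fun i => p i ^ 2) N <= R1 ^ 2 -> sum_f_R0 (fun i => q i ^ 2) N <= R2 ^ 2 ->
  sum_f_R0 (fun i => p i * q i) N <= R1 * R2.
Proof.
  intros Hp Hq HR1 HR2 HP HQ.
  destruct (Req_dec R1 0) as [->|H1].
  { rewrite Rmult_0_l. apply sum_mult_le_0; auto. lra. }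
  destruct (Req_dec R2 0) as [->|H2].
  { rewrite Rmult_0_r, (sum_eq _ (fun i => q i * p i)) by (intros; ring). apply sum_mult_le_0; auto. lra. }
  set (t := R2 / R1). assert (Ht : 0 < t) by (apply Rdiv_lt_0_compat; lra).
  apply Rle_trans with (sum_f_R0 (fun i => p i ^ 2 * (t / 2) + q i ^ 2 * (/ t / 2)) N).
  - apply sum_Rle. intros i _.
    assert (0 <= (t * p i - q i) ^ 2 / t / 2)
      by (apply Rdiv_le_0_compat; [apply Rdiv_le_0_compat; [apply pow2_ge_0 | lra] | lra]).
    replace (p i ^ 2 * (t / 2) + q i ^ 2 * (/ t / 2)) with (p i * q i + (t * p i - q i) ^ 2 / t / 2)
      by (field; lra).
    lra.
  - rewrite plus_sum, !sum_f_R0_scal_r.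
    assert (0 < / t) by now apply Rinv_0_lt_compat.
    apply Rle_trans with (R1 ^ 2 * (t / 2) + R2 ^ 2 * (/ t / 2)).
    + apply Rplus_le_compat; apply Rmult_le_compat_r; auto; lra.
    + right. unfold t. field. lra.
Qed.

Lemma sum_Cmod_mult_le x y r N : norm_le x r -> l2 y ->
  sum_f_R0 (fun i => Cmod (x i) * Cmod (y i)) N <= r * hnorm y.
Proof.
  intros [Hr Hx] Hy. destruct (norm_le_hnorm y Hy) as [Hy0 HyN].
  apply sum_mult_le_Cauchy_Schwarz; auto; intros; apply Cmod_ge_0.
Qed.

Lemma truncation_coord (x : vec) N n : (n <= N)%nat ->
  sum_n (fun i => Cmult (x i) (basis i n)) N = x n.
Proof.
  intros Hn. rewrite (Csum_single _ N n Hn), basis_eq, Nat.eqb_refl; [Cring|].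
  intros i _ Hi. rewrite basis_eq. destruct (Nat.eqb_spec n i); [lia | Cring].
Qed.

Lemma l2_truncation (x : vec) N : l2 (fun n => sum_n (fun i => Cmult (x i) (basis i n)) N).
Proof.
  eapply norm_le_l2, (norm_le_sum (fun i n => Cmult (x i) (basis i n)) (fun i => Cmod (x i) * 1)).
  intros. apply norm_le_scal, basis_norm_le.
Qed.

Section HilbertSchmidt.
Variable a : nat -> C.
Hypothesis ha0 : forall n, a n <> (0:C).
Hypothesis hdec : forall n, Cmod (a (S n)) <= Cmod (a n).
Notation T := (wshift a).

Lemma inAT_wshift_basis_norm_le X rw i : inAT a X -> norm_le (X (basis 0)) rw ->
  norm_le (T (X (basis i))) (Cmod (a i) * rw).
Proof.
  intros HX Hrw. pose proof (wprod_neq0 a ha0 0 i) as Hb.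
  rewrite (basis_eq_wshift_pow a ha0 i), (inAT_homogeneous_l2 a), (inAT_wshift_pow_comm a hdec)
    by (try apply (l2_wshift_pow a hdec); auto using l2_basis).
  rewrite wshift_homogeneous.
  change (T (op_pow T i (X (basis 0)))) with (op_pow T (S i) (X (basis 0))).
  replace (Cmod (a i) * rw) with (Cmod (/ wprod a 0 i) * ((Cmod (a i) * Cmod (wprod a 0 i)) * rw)).
  - apply norm_le_scal, (wshift_pow_norm_le_by a); auto.
    + apply Rmult_le_pos; apply Cmod_ge_0.
    + intros m. now apply wprod_succ_le.
  - rewrite Cmod_inv by exact Hb. field. now apply Rgt_not_eq, Cmod_gt_0.
Qed.

Hypothesis hsum : ex_series (fun n => Cmod (a n) ^ 2).

(* On [e_i], [T X] equals [T^(i+1) X e_0 / wprod a 0 i], of norm at most [|a_i| ||X e_0||] since the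
   weights decrease; Cauchy-Schwarz sums these bounds over a truncation of [x]. *)
Lemma wshift_comp_norm_le X x r rw : inAT a X -> norm_le x r -> norm_le (X (basis 0)) rw ->
  norm_le (T (X x)) (hnorm a * rw * r).
Proof.
  intros HX Hx Hrw. pose proof (norm_le_nonneg _ _ Hx). pose proof (norm_le_nonneg _ _ Hrw).
  pose proof (hnorm_nonneg a). split; [apply Rmult_le_pos; [apply Rmult_le_pos|]; auto|]. intros N.
  set (xN := fun n => sum_n (fun i => Cmult (x i) (basis i n)) N).
  assert (HxN : forall n, (n <= N)%nat -> x n = xN n) by (intros; symmetry; now apply truncation_coord).
  assert (Hl2 : forall i, (i <= N)%nat -> l2 (fun n => Cmult (x i) (basis i n)))
    by (intros; eapply norm_le_l2, norm_le_scal, basis_norm_le).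
  assert (HX_xN : T (X xN) = fun n => sum_n (fun i => Cmult (x i) (T (X (basis i)) n)) N).
  { unfold xN. rewrite (inAT_sum_l2 a), (additive_sum T (wshift_additive a)) by auto.
    apply functional_extensionality. intros n. apply Csum_ext. intros i _.
    now rewrite (inAT_homogeneous_l2 a), wshift_homogeneous by (auto using l2_basis). }
  replace (sum_f_R0 (fun n => Cmod (T (X x) n) ^ 2) N) with (sqsum (T (X xN)) N).
  2: { apply sum_eq. intros n Hn. rewrite (wshift_causal a (X x) (X xN) N); auto.
       intros m Hm. apply (inAT_causal_l2 a X x xN N); auto.
       - eapply norm_le_l2, Hx.
       - apply l2_truncation. }
  assert (Hsum : norm_le (T (X xN)) (sum_f_R0 (fun i => Cmod (x i) * Cmod (a i)) N * rw)).
  { rewrite HX_xN, <- sum_f_R0_scal_r.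
    apply (norm_le_sum (fun i n => Cmult (x i) (T (X (basis i)) n))). intros i _.
    rewrite Rmult_assoc. now apply norm_le_scal, inAT_wshift_basis_norm_le. }
  destruct Hsum as [_ Hsum]. eapply Rle_trans; [apply Hsum|].
  apply pow_incr. split.
  - apply Rmult_le_pos; [apply cond_pos_sum; intros; apply Rmult_le_pos; apply Cmod_ge_0 | auto].
  - replace (hnorm a * rw * r) with (r * hnorm a * rw) by ring.
    apply Rmult_le_compat_r; [auto | now apply sum_Cmod_mult_le].
Qed.

Lemma wshift_pow_succ_mem_of_closed_span_orbit I S0 k : closed_ideal a I -> (1 <= k)%nat ->
  inAT a S0 -> I S0 -> in_closed_span_orbit a S0 k -> I (op_pow T (S k)).
Proof.
  intros HI Hk HS HIS Hspan. pose proof HI as [_ [_ [_ [Hscal [Hmul Hclosed]]]]].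
  apply Hclosed. intros e He.
  set (b := wprod a 0 k). pose proof (Cmod_ge_0 b). pose proof (hnorm_nonneg a).
  set (dl := e / (hnorm a * Cmod b + 1)).
  assert (Hdl : 0 < dl) by (apply div_succ_pos; [apply Rmult_le_pos|]; auto).
  destruct (Hspan dl Hdl) as [c [d Hcd]].
  set (W := op_comp (tpoly a c d) S0).
  exists (op_scal b (op_comp T W)). split.
  { apply Hscal. apply (Hmul (op_pow T 1) W); [apply (inAT_wshift_pow a); lia|].
    now apply (closed_ideal_tpoly_comp a I HI). }
  set (Xk := op_add (op_pow T k) (op_scal (Copp b) W)).
  assert (HXk : inAT a Xk).
  { apply (inAT_add a); [apply (inAT_wshift_pow a); lia|].
    apply (inAT_scal a), (closed_ideal_tpoly_comp a _ (closed_ideal_inAT a hdec)), HS. }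
  assert (HXk0 : norm_le (Xk (basis 0)) (Cmod b * dl)).
  { replace (Xk (basis 0)) with (fun n => Cmult b (vsub (basis k) (tpoly a c d (S0 (basis 0))) n)).
    - now apply norm_le_scal.
    - apply functional_extensionality. intros n.
      unfold Xk, op_add, op_scal, W, op_comp, vsub. rewrite wshift_pow_basis0. fold b. Cring. }
  intros x Hx.
  replace (vsub (op_pow T (S k) x) (op_scal b (op_comp T W) x)) with (T (Xk x)).
  - eapply norm_le_weaken; [exact (wshift_comp_norm_le Xk x _ _ HXk (norm_le_hnorm x Hx) HXk0)|].
    apply Rmult_le_compat_r; [apply hnorm_nonneg|].
    rewrite <- Rmult_assoc. apply mul_div_succ_le; [apply Rmult_le_pos|]; lra.
  - apply functional_extensionality. intros [|n]; unfold vsub, Xk, op_add, op_scal, op_comp; simpl; Cring.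
Qed.

End HilbertSchmidt.

Lemma gen_ideal_ext a R1 R2 : (forall I, closed_ideal a I -> (I R1 <-> I R2)) ->
  forall X, gen_ideal a R1 X <-> gen_ideal a R2 X.
Proof. intros H X. split; intros HX I HI HIR; apply HX, H; auto. Qed.

Section Main.
Variable a : nat -> C.
Hypothesis ha0 : forall n, a n <> (0:C).
Hypothesis hdec : forall n, Cmod (a (S n)) <= Cmod (a n).
Hypothesis hsum : ex_series (fun n => Cmod (a n) ^ 2).
Notation T := (wshift a).

Lemma coord_eq0_of_Shat_eq0 S0 j : Shat a S0 j = (0:C) -> S0 (basis 0) j = (0:C).
Proof.
  unfold Shat. rewrite wshift_pow_basis0_self. intros H.
  replace (S0 (basis 0) j) with (Cmult (Cdiv (S0 (basis 0) j) (wprod a 0 j)) (wprod a 0 j)).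
  - rewrite H. Cring.
  - Cfield. now apply wprod_neq0.
Qed.

(* [S - Shat(k) T^k] vanishes at [e_1, ..., e_k], so it lies in every closed ideal containing [T^(k+1)]. *)
Lemma wshift_pow_mem_of_closed_span_orbit I S0 k : closed_ideal a I -> (1 <= k)%nat -> inAT a S0 ->
  (forall j, (1 <= j)%nat -> (j < k)%nat -> S0 (basis 0) j = (0:C)) -> Shat a S0 k <> (0:C) ->
  in_closed_span_orbit a S0 k -> I S0 -> I (op_pow T k).
Proof.
  intros HI Hk HS Hz Hnz Hspan HIS. pose proof HI as [_ [_ [Hadd [Hscal _]]]].
  set (s := Shat a S0 k). set (R := op_add S0 (op_scal (Copp s) (op_pow T k))).
  assert (HIR : I R).
  { apply (closed_ideal_mem_of_coord_vanish a hdec I (S k)); auto.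
    - now apply (wshift_pow_succ_mem_of_closed_span_orbit a ha0 hdec hsum I S0).
    - apply (inAT_add a), (inAT_scal a), (inAT_wshift_pow a); auto.
    - intros j Hj1 Hj2. unfold R, op_add, op_scal. rewrite wshift_pow_basis0, basis_eq.
      destruct (Nat.eqb_spec j k) as [->|Hjk].
      + unfold s, Shat. rewrite wshift_pow_basis0_self. Cfield. now apply wprod_neq0.
      + rewrite Hz by lia. Cring. }
  replace (op_pow T k) with (op_scal (/ s) (op_add S0 (op_scal (Copp 1) R))).
  - apply Hscal, Hadd, Hscal; auto.
  - op_ext. unfold R, op_scal, op_add. Cfield. exact Hnz.
Qed.

End Main.

Theorem mainTheorem12 (a : nat -> C)
  (ha0 : forall n, a n <> 0%C)
  (hdec : forall n, Cmod (a (S n)) <= Cmod (a n))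
  (hsum : ex_series (fun n => (Cmod (a n)) ^ 2))
  (S : op) (k : nat)
  (hS : inAT a S) (hk : (1 < k)%nat)
  (hz : forall j, (1 <= j)%nat -> (j <= k - 1)%nat -> Shat a S j = 0%C)
  (hnz : Shat a S k <> 0%C) :
  (forall X, gen_ideal a S X <-> gen_ideal a (op_pow (wshift a) k) X)
  <-> in_closed_span_orbit a S k.
Proof.
  assert (Hz : forall j, (1 <= j)%nat -> (j < k)%nat -> S (basis 0) j = (0:C))
    by (intros; apply (coord_eq0_of_Shat_eq0 a ha0), hz; lia).
  split.
  - intros Hgen. apply (closed_span_orbit_of_wshift_pow_mem a hdec S hS ha0), Hgen.
    intros I _ HI. exact HI.
  - intros Hspan. apply gen_ideal_ext. intros I HI. split.
    + apply (wshift_pow_mem_of_closed_span_orbit a ha0 hdec hsum I S k); auto. lia.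
    + intros HIk. apply (closed_ideal_mem_of_coord_vanish a hdec I k); auto.
Qed.
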